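(* For all $y,k\in\mathbb N_0$, we have $y+2k+\{4,6,7,8,10,11\}+4\cdot[0,k]\in\mathcal L(C_2^5)$.
   Context: $C_2^r$ denotes an elementary abelian $2$-group of rank $r$; $[a,b]=\{x\in\mathbb Z:a\le x\le b\}$. For $L,L'\subset\mathbb Z$ and $y,k\in\mathbb Z$: $L+L'=\{a+b:a\in L,b\in L'\}$, $y+L=\{y\}+L$, and $k\cdot L=\{ka:a\in L\}$ (so $4\cdot[0,k]=\{0,4,\dots,4k\}$). For a subset $G_0$ of a finite abelian group $G$, a sequence over $G_0$ is an element of the free abelian monoid $\mathcal F(G_0)$ with basis $G_0$ (a finite unordered list of elements of $G_0$, repetitions allowed). $\mathcal B(G_0)$ is the monoid of zero-sum sequences over $G_0$ (including the empty sequence). An atom is a minimal zero-sum sequence, i.e. a nonempty zero-sum sequence that is not a product of two nonempty zero-sum sequences. For $B\in\mathcal B(G_0)$, $\mathsf L(B)=\{k\in\mathbb N_0: B \text{ is a product of } k \text{ atoms}\}$, and $\mathcal L(G_0)=\{\mathsf L(B):B\in\mathcal B(G_0)\}$; $\mathcal L(G)$ is the case $G_0=G$. *)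

From mathcomp Require Import all_boot all_algebra.
Set Implicit Arguments. Unset Strict Implicit. Unset Printing Implicit Defensive.
Import GRing.Theory.
Local Open Scope ring_scope.

Definition C2r (r : nat) := 'rV['Z_2]_r.

Section ZeroSum.
Variable G : finZmodType.

(* A sequence over G (element of the free abelian monoid F(G)) is given by its
   multiplicity function; since G is finite this is exactly F(G). *)
Definition fseq := {ffun G -> nat}.

Definition fseq_one : fseq := [ffun => 0%N].
Definition fseq_mul (S T : fseq) : fseq := [ffun g => (S g + T g)%N].
Definition fseq_len (S : fseq) : nat := (\sum_(g : G) S g)%N.
Definition fseq_sigma (S : fseq) : G := \sum_(g : G) g *+ S g.

Definition zero_sum (S : fseq) : Prop := fseq_sigma S = 0.

Definition atom (A : fseq) : Prop :=
  zero_sum A /\ (0 < fseq_len A)%N /\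
  ~ (exists B C : fseq, [/\ zero_sum B, zero_sum C, (0 < fseq_len B)%N,
                          (0 < fseq_len C)%N & A = fseq_mul B C]).

Definition in_lengths (B : fseq) (k : nat) : Prop :=
  exists s : seq fseq, [/\ size s = k, (forall A, A \in s -> atom A)
                        & B = foldr fseq_mul fseq_one s].

Definition in_system_of_lengths (L : nat -> Prop) : Prop :=
  exists B : fseq, zero_sum B /\ (forall k, in_lengths B k <-> L k).
End ZeroSum.

Definition L3p10 (y k : nat) (n : nat) : Prop :=
  exists j i : nat, [/\ j \in [:: 4; 6; 7; 8; 10; 11]%N, (i <= k)%N
                      & n = (y + 2 * k + j + 4 * i)%N].

From mathcomp Require Import all_boot all_algebra zify.
Set Implicit Arguments. Unset Strict Implicit. Unset Printing Implicit Defensive.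
Import GRing.Theory.

(* Let e1,...,e5 be the standard basis of C_2^5, e0 = e1+...+e5, f1 = e1+e2+e3
   and f2 = e1+e2+e4.  We show that the set of lengths of
     B = 0^y e0^(4+2k) e1^(4+2k) e2^(4+2k) e3^(3+2k) e4^(3+2k) e5^(4+2k) f1 f2
   is exactly L3p10 y k, which equals y + 2k + {4,6,7} + 4.[0,k+1].

   1. Sequences supported on a duplicate-free list gs of group elements are
      encoded by their multiplicity vectors (section Coordinates).
   2. For the nine elements 0, e0, ..., e5, f1, f2, the atoms are exactly sixteen
      explicit vectors: the atom 0, the eight squares g^2 and seven squarefree
      atoms; this is verified by enumerating all vectors with entries <= 2.
   3. Hence factorizations of B correspond to multiplicities c(a) of these atoms
      with \sum_a c(a) a = coordinates of B, the length being \sum_a c(a).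
   4. Solving this linear system gives the lengths (realized_lengths), and
      explicit solutions realize every element of the set (lengths_realized). *)

Lemma all2_leqP (u w : seq nat) :
  reflect (size u = size w /\ forall i, nth 0 u i <= nth 0 w i) (all2 leq u w).
Proof.
elim: u w => [|a u IH] [|b w] /=.
- by constructor; split => // i; rewrite nth_nil.
- by constructor; case.
- by constructor; case.
apply: (iffP andP) => [[le_ab /IH [-> le_uw]] | [[sz] le_uw]]; first by split => // [[]].
by split; [apply: (le_uw 0) | apply/IH; split => // i; apply: (le_uw i.+1)].
Qed.

Section FreeMonoid.
Variable G : finZmodType.

Definition fprod (s : seq (fseq G)) : fseq G := foldr (@fseq_mul G) (fseq_one G) s.

Lemma fprodE (s : seq (fseq G)) g : fprod s g = \sum_(A <- s) A g.
Proof. by elim: s => [|A s IH]; rewrite ?big_nil ?big_cons ffunE // IH. Qed.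

Lemma fprod_ge (s : seq (fseq G)) A g : A \in s -> A g <= fprod s g.
Proof.
rewrite fprodE; elim: s => [|B s IH] //; rewrite in_cons big_cons => /orP [/eqP -> | /IH].
  exact: leq_addr.
by move/leq_trans; apply; apply: leq_addl.
Qed.

Lemma fseq_sigma_mul (B C : fseq G) :
  fseq_sigma (fseq_mul B C) = (fseq_sigma B + fseq_sigma C)%R.
Proof. by rewrite /fseq_sigma -big_split; apply: eq_bigr => g _; rewrite ffunE mulrnDr. Qed.

Lemma zero_sum_fprod (s : seq (fseq G)) :
  (forall A, A \in s -> zero_sum A) -> zero_sum (fprod s).
Proof.
elim: s => [_|A s IH zs]; first by rewrite /zero_sum /fseq_sigma big1 // => g _; rewrite ffunE.
rewrite /zero_sum /= fseq_sigma_mul (zs A (mem_head _ _)) IH ?add0r // => B Bs.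
by apply: zs; rewrite in_cons Bs orbT.
Qed.

Lemma fseq_len_gt0 (A : fseq G) : (0 < fseq_len A) = [exists g, 0 < A g].
Proof.
apply/idP/existsP => [|[g Ag]]; last by rewrite /fseq_len (bigD1 g) // ltn_addr.
by rewrite /fseq_len lt0n sum_nat_eq0 negb_forall => /existsP [g]; rewrite -lt0n; exists g.
Qed.

Lemma atom_divisor (A D : fseq G) :
  atom A -> zero_sum D -> 0 < fseq_len D -> (forall g, D g <= A g) -> D = A.
Proof.
move=> [zsA [_ indecA]] zsD lenD le_DA; pose C : fseq G := [ffun g => A g - D g].
have defA : A = fseq_mul D C.
  by apply/ffunP => g; rewrite !ffunE subnKC.
have [C0 | lenC] := posnP (fseq_len C).
  apply/ffunP => g; rewrite defA ffunE.
  by move/eqP: C0; rewrite sum_nat_eq0 => /forallP /(_ g) /eqP ->; rewrite addn0.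
case: indecA; exists D, C; split => //.
by move: zsA; rewrite /zero_sum defA fseq_sigma_mul zsD add0r.
Qed.
End FreeMonoid.

Section Coordinates.
Variables (G : finZmodType) (gs : seq G).
Hypothesis gs_uniq : uniq gs.

Definition of_coords (v : seq nat) : fseq G := [ffun g => nth 0 v (index g gs)].
Definition coords (A : fseq G) : seq nat := map A gs.
Definition supported (A : fseq G) : Prop := forall g, g \notin gs -> A g = 0.

Lemma size_coords A : size (coords A) = size gs.
Proof. exact: size_map. Qed.

Lemma nth_coords A i : i < size gs -> nth 0 (coords A) i = A (nth 0%R gs i).
Proof. by move=> lt_i; rewrite (nth_map 0%R). Qed.

Lemma of_coords_nth v i : i < size gs -> of_coords v (nth 0%R gs i) = nth 0 v i.
Proof. by move=> lt_i; rewrite ffunE index_uniq. Qed.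

Lemma supported_of_coords v : size v <= size gs -> supported (of_coords v).
Proof. by move=> le_v g gNs; rewrite ffunE memNindex // nth_default. Qed.

Lemma coordsK A : supported A -> of_coords (coords A) = A.
Proof.
move=> suppA; apply/ffunP => g; rewrite ffunE; have [gs_g | gNs] := boolP (g \in gs).
  by rewrite (nth_map 0%R) ?index_mem // nth_index.
by rewrite memNindex // nth_default ?size_coords // suppA.
Qed.

Lemma of_coordsK v : size v = size gs -> coords (of_coords v) = v.
Proof.
move=> sz_v; apply: (@eq_from_nth _ 0) => [|i]; rewrite size_coords // => lt_i.
by rewrite nth_coords // of_coords_nth // -sz_v.
Qed.

Lemma sigma_of_coords v : size v <= size gs ->
  fseq_sigma (of_coords v) = (\sum_(i < size gs) nth 0%R gs i *+ nth 0 v i)%R.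
Proof.
move=> le_v; rewrite /fseq_sigma (bigID (mem gs)) /= [X in (_ + X)%R]big1 ?addr0; last first.
  by move=> g /(supported_of_coords le_v) ->.
rewrite -(big_uniq _ gs_uniq) (big_nth 0%R) big_mkord.
by apply: eq_bigr => i _; rewrite of_coords_nth.
Qed.

Lemma supported_le (A B : fseq G) : supported A -> (forall g, B g <= A g) -> supported B.
Proof. by move=> suppA le_BA g gNs; apply/eqP; rewrite -leqn0 -(suppA g gNs). Qed.

Lemma coords_le (A B : fseq G) : (forall g, B g <= A g) -> all2 leq (coords B) (coords A).
Proof.
move=> le_BA; apply/all2_leqP; split => [|i]; first by rewrite !size_coords.
have [lt_i | ge_i] := ltnP i (size gs); first by rewrite !nth_coords.
by rewrite nth_default ?size_coords.
Qed.

Lemma of_coords_le v A :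
  supported A -> all2 leq v (coords A) -> forall g, of_coords v g <= A g.
Proof.
move=> suppA /all2_leqP [sz_v le_vA] g; have [gs_g | gNs] := boolP (g \in gs).
  by rewrite ffunE (leq_trans (le_vA _)) // nth_coords ?index_mem ?nth_index.
by rewrite ffunE memNindex // nth_default // sz_v size_coords.
Qed.

Lemma fseq_len_coords A : supported A -> (0 < fseq_len A) = has (leq 1) (coords A).
Proof.
move=> suppA; rewrite fseq_len_gt0; apply/existsP/hasP => [[g Ag] | [_ /mapP [g gs_g ->] Ag]].
  by exists (A g); rewrite // map_f //; apply: contraTT Ag => /suppA ->.
by exists g.
Qed.
End Coordinates.

(* The nine group elements 0, e0, e1, ..., e5, f1, f2 of C_2^5, listed as bit
   vectors; gens is the corresponding list of elements of C2r 5. *)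
Definition gen_bits : seq (seq nat) :=
  [:: [::0;0;0;0;0]; [::1;1;1;1;1]; [::1;0;0;0;0]; [::0;1;0;0;0]; [::0;0;1;0;0];
      [::0;0;0;1;0]; [::0;0;0;0;1]; [::1;1;1;0;0]; [::1;1;0;1;0]].

Definition row_of_bits (b : seq nat) : C2r 5 := (\row_(j < 5) (nth 0 b j)%:R)%R.
Definition gens : seq (C2r 5) := map row_of_bits gen_bits.

Lemma gens_uniq : uniq gens.
Proof.
pose bits_of (r : C2r 5) := [seq val (r ord0 (inord j)) | j <- iota 0 5].
have bits_ofE b : bits_of (row_of_bits b) = [seq nth 0 b j %% 2 | j <- iota 0 5].
  apply/eq_in_map => j; rewrite mem_iota => /andP [_ lt_j].
  by rewrite mxE inordK // Zp_nat.
apply: (@map_uniq _ _ bits_of); rewrite -map_comp (eq_map bits_ofE).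
by vm_compute.
Qed.

(* Parity-check form of the condition \sum_i v_i gens_i = 0, decidable by computation. *)
Definition zs_vec (v : seq nat) : bool :=
  all (fun j => ~~ odd (sumn [seq nth 0 (nth [::] gen_bits i) j * nth 0 v i | i <- iota 0 9]))
      (iota 0 5).

Lemma Z2_nat_eq0 m : ((m%:R : 'Z_2) == 0)%R = ~~ odd m.
Proof. by rewrite -val_eqE Zp_nat /= modn2; case: odd. Qed.

Lemma zero_sum_of_coords v : size v <= 9 -> zero_sum (of_coords gens v) <-> zs_vec v.
Proof.
move=> le_v; rewrite /zero_sum sigma_of_coords ?gens_uniq //.
have coordE (j : 'I_5) : ((\sum_(i < size gens) nth 0 gens i *+ nth 0 v i) ord0 j)%R =
    (sumn [seq nth 0 (nth [::] gen_bits i) j * nth 0 v i | i <- iota 0 9])%:R%R.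
  rewrite summxE sumnE big_map natr_sum -[iota 0 9]/(index_iota 0 9) big_mkord.
  by apply: eq_bigr => i _; rewrite mulmxnE (nth_map [::]) // mxE natrM mulr_natr.
rewrite /zs_vec; split => [zs | /allP zs].
  apply/allP => j; rewrite mem_iota => /andP [_ lt_j].
  by rewrite -Z2_nat_eq0 -(coordE (Ordinal lt_j)) zs mxE.
by apply/rowP => j; apply/eqP; rewrite coordE mxE Z2_nat_eq0 zs // mem_iota ltn_ord.
Qed.

Definition square_vec (p : nat) : seq nat := [seq (if i == p then 2 else 0) | i <- iota 0 9].

(* The coordinates of the sixteen atoms over gens: the atom 0, the eight squares,
   e0 e1 e2 e3 e4 e5, e1 e2 e3 f1, e0 e4 e5 f1, e1 e2 e4 f2, e0 e3 e5 f2,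
   e3 e4 f1 f2 and e0 e1 e2 e5 f1 f2. *)
Definition atom_vecs : seq (seq nat) :=
  [:: [::1;0;0;0;0;0;0;0;0];
      square_vec 1; square_vec 2; square_vec 3; square_vec 4;
      square_vec 5; square_vec 6; square_vec 7; square_vec 8;
      [::0;1;1;1;1;1;1;0;0];
      [::0;0;1;1;1;0;0;1;0];
      [::0;1;0;0;0;1;1;1;0];
      [::0;0;1;1;0;1;0;0;1];
      [::0;1;0;0;1;0;1;0;1];
      [::0;0;0;0;1;1;0;1;1];
      [::0;1;1;1;0;0;1;1;1]].

Definition below (w : seq nat) : seq (seq nat) :=
  foldr (fun a acc => flatten [seq [seq x :: t | t <- acc] | x <- iota 0 a.+1]) [:: [::]] w.

Lemma mem_below u w : all2 leq u w -> u \in below w.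
Proof.
elim: w u => [|b w IH] [|a u] // /andP [le_ab le_uw].
apply/flattenP; exists [seq a :: t | t <- below w]; last exact/map_f/IH.
by apply/(map_f (fun x => [seq x :: t | t <- below w])); rewrite mem_iota.
Qed.

Definition minimal_vec (w : seq nat) : bool :=
  all (fun u => ~~ zs_vec u || (u == nseq 9 0) || (u == w)) (below w).

Lemma atom_vecs_spec :
  all (fun a => [&& zs_vec a, has (leq 1) a, size a == 9 & minimal_vec a]) atom_vecs.
Proof. by vm_compute. Qed.

Lemma atom_vecs_uniq : uniq atom_vecs.
Proof. by vm_compute. Qed.

Lemma atom_vecs_complete :
  all (fun u => ~~ has (leq 1) u || has (fun a => all2 leq a u) atom_vecs ||
                (all (leq^~ 1) u && ~~ zs_vec u)) (below (nseq 9 2)).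
Proof. by vm_compute. Qed.

Lemma atom_vecs_atom w : w \in atom_vecs -> atom (of_coords gens w).
Proof.
move=> w_in; have /and4P [zs_w pos_w /eqP sz_w min_w] := allP atom_vecs_spec w w_in.
have suppA : supported gens (of_coords gens w) by apply: supported_of_coords; rewrite sz_w.
have coordsA : coords gens (of_coords gens w) = w by rewrite of_coordsK ?gens_uniq.
split; first by apply/zero_sum_of_coords; rewrite ?sz_w.
split; first by rewrite (fseq_len_coords suppA) coordsA.
case=> B [C [zsB _ lenB lenC defA]].
have le_BA g : B g <= of_coords gens w g by rewrite defA ffunE leq_addr.
have suppB := supported_le suppA le_BA.
have zs_B : zs_vec (coords gens B) by apply/zero_sum_of_coords; rewrite ?size_coords ?coordsK.
have le_Bw : all2 leq (coords gens B) w by rewrite -coordsA; apply: coords_le.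
have := allP min_w _ (mem_below le_Bw).
rewrite zs_B => /orP [/orP [// | /eqP B0] | /eqP Bw].
  by move: lenB; rewrite (fseq_len_coords suppB) B0.
suff C0 g : C g = 0 by move: lenC; rewrite /fseq_len big1.
by move/ffunP/(_ g): defA; rewrite -(coordsK suppB) Bw !ffunE; lia.
Qed.

(* Conversely, every atom supported on gens is encoded by a vector of atom_vecs:
   its truncation at 2 either lies above some vector of atom_vecs, which then
   divides it, or is a squarefree sequence that is not zero-sum. *)
Lemma atom_coords A : atom A -> supported gens A -> coords gens A \in atom_vecs.
Proof.
move=> atomA suppA; have [zsA [lenA _]] := atomA; set u := map (minn 2) (coords gens A).
have zs_A : zs_vec (coords gens A) by apply/zero_sum_of_coords; rewrite ?size_coords ?coordsK.
have u_below : u \in below (nseq 9 2).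
  apply/mem_below/all2_leqP; split => [|i]; first by rewrite size_map size_coords.
  rewrite nth_nseq; case: ltnP => lt_i; last by rewrite nth_default // size_map size_coords.
  by rewrite (nth_map 0) ?size_coords // geq_minl.
have := allP atom_vecs_complete u u_below; case/orP => [/orP [u0 | /hasP [a a_in le_au]] | ].
- case/negP: u0; move: lenA; rewrite (fseq_len_coords suppA) => /hasP [x x_in le1x].
  by apply/hasP; exists (minn 2 x); rewrite ?map_f // leq_min.
- have /and4P [zs_a pos_a /eqP sz_a _] := allP atom_vecs_spec a a_in.
  have le_a : all2 leq a (coords gens A).
    move/all2_leqP: le_au => [sz le_au]; apply/all2_leqP.
    split => [|i]; first by rewrite sz size_map.
    apply: leq_trans (le_au i) _; have [lt_i | ge_i] := ltnP i (size (coords gens A)).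
      by rewrite (nth_map 0) // geq_minr.
    by rewrite nth_default ?size_map.
  have suppa : supported gens (of_coords gens a) by apply: supported_of_coords; rewrite sz_a.
  rewrite -(atom_divisor atomA _ _ (of_coords_le suppA le_a)) ?of_coordsK ?gens_uniq //.
    by apply/zero_sum_of_coords; rewrite ?sz_a.
  by rewrite (fseq_len_coords suppa) of_coordsK ?gens_uniq.
- case/andP => /allP le1 /negP []; suff -> : u = coords gens A by [].
  rewrite /u -[RHS]map_id; apply/eq_in_map => x x_in; have := le1 _ (map_f (minn 2) x_in).
  by rewrite /minn; case: ltnP => //; case: x {x_in} => [|[|]].
Qed.

Lemma sum_by_counts (T : eqType) (L ws : seq T) (f : T -> nat) :
  uniq L -> {subset ws <= L} -> \sum_(w <- ws) f w = \sum_(a <- L) count_mem a ws * f a.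
Proof.
move=> uniqL wsL; rewrite (eq_big_seq (fun w => \sum_(a <- L) (w == a) * f a)); last first.
  move=> w /wsL w_in; rewrite (bigD1_seq w) //= eqxx mul1n big1 ?addn0 // => a.
  by rewrite eq_sym => /negbTE ->.
rewrite exchange_big; apply: eq_bigr => a _; rewrite -big_distrl /= -sumn_count sumnE big_map.
by congr (_ * _); apply: eq_bigr => w _; rewrite eq_sym.
Qed.

Definition realizes (c : seq nat -> nat) (v : seq nat) : Prop :=
  forall i, nth 0 v i = \sum_(a <- atom_vecs) c a * nth 0 a i.

Lemma factorization_counts v n : size v = 9 -> in_lengths (of_coords gens v) n ->
  exists c, realizes c v /\ n = \sum_(a <- atom_vecs) c a.
Proof.
move=> sz_v [s [<- atoms_s defB]].
have suppB : supported gens (of_coords gens v) by apply: supported_of_coords; rewrite sz_v.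
have sub_s : {subset map (coords gens) s <= atom_vecs}.
  move=> _ /mapP [A A_in ->]; apply: atom_coords; first exact: atoms_s.
  by apply: supported_le suppB _ => g; rewrite defB (fprod_ge g A_in).
exists (fun a => count_mem a (map (coords gens) s)); split => [i | ]; last first.
  rewrite -(size_map (coords gens)) -sum1_size (sum_by_counts (fun=> 1) atom_vecs_uniq sub_s).
  by under eq_bigr do rewrite muln1.
rewrite -(sum_by_counts (fun a => nth 0 a i) atom_vecs_uniq sub_s) big_map.
have [lt_i | ge_i] := ltnP i 9.
  rewrite -[v](of_coordsK gens_uniq) ?sz_v // nth_coords // defB fprodE.
  by apply: eq_big_seq => A _; rewrite nth_coords.
rewrite nth_default ?sz_v // big1_seq // => A _; rewrite nth_default // size_coords.
Qed.

Lemma counts_factorization c v :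
  realizes c v -> in_lengths (of_coords gens v) (\sum_(a <- atom_vecs) c a).
Proof.
move=> real_cv; exists (flatten [seq nseq (c a) (of_coords gens a) | a <- atom_vecs]).
split.
- rewrite size_flatten /shape -map_comp sumnE big_map.
  by apply: eq_bigr => a _; rewrite /= size_nseq.
- move=> A /flattenP [_ /mapP [a a_in ->]]; rewrite mem_nseq => /andP [_ /eqP ->].
  exact: atom_vecs_atom.
change (of_coords gens v = fprod (flatten [seq nseq (c a) (of_coords gens a) | a <- atom_vecs])).
apply/ffunP => g; rewrite fprodE big_flatten big_map ffunE real_cv.
by apply: eq_bigr => a _; rewrite big_nseq iter_addn_0 mulnC ffunE.
Qed.

Definition bvec (y k : nat) : seq nat :=
  [:: y; 4 + 2 * k; 4 + 2 * k; 4 + 2 * k; 3 + 2 * k; 3 + 2 * k; 4 + 2 * k; 1; 1].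

Lemma L3p10E y k n :
  L3p10 y k n <-> exists j m, [/\ j \in [:: 4; 6; 7], m <= k.+1 & n = y + 2 * k + j + 4 * m].
Proof.
split => [[j [i [j_in le_ik ->]]] | [j [m [j_in le_mk ->]]]].
  move: j_in; rewrite !inE.
  case/or3P => [/eqP -> | /eqP -> | /or3P [/eqP -> | /eqP -> | /orP [/eqP -> | /eqP ->]]].
  - by exists 4, i; split => //; apply: leqW.
  - by exists 6, i; split => //; apply: leqW.
  - by exists 7, i; split => //; apply: leqW.
  - by exists 4, i.+1; split => //; lia.
  - by exists 6, i.+1; split => //; lia.
  - by exists 7, i.+1; split => //; lia.
have [-> | lt_mk] := eqVneq m k.+1.
  move: j_in; rewrite !inE => /or3P [] /eqP ->; [exists 8 | exists 10 | exists 11];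
  by exists k; split => //; lia.
exists j, m; split => //; last by rewrite -ltnS ltn_neqAle lt_mk.
by move: j_in; rewrite !inE => /or3P [] ->; rewrite ?orbT.
Qed.

Definition counts (cs : seq nat) (a : seq nat) : nat := nth 0 cs (index a atom_vecs).

Lemma lengths_realized y k j m : j \in [:: 4; 6; 7] -> m <= k.+1 ->
  in_lengths (of_coords gens (bvec y k)) (y + 2 * k + j + 4 * m).
Proof.
move=> j_in le_mk; pose r := (2 * (k.+1 - m))%N.
suff [cs [real_cs sum_cs]] : exists cs, realizes (counts cs) (bvec y k) /\
    \sum_(a <- atom_vecs) counts cs a = y + 2 * k + j + 4 * m.
  by rewrite -sum_cs; apply: counts_factorization.
move: j_in; rewrite !inE => /or3P [] /eqP ->; [
  exists [:: y; m; m; m; m; m; m; 0; 0; r.+1; 0; 0; 0; 0; 0; 1] |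
  exists [:: y; m.+1; m; m; m; m; m.+1; 0; 0; r; 1; 0; 1; 0; 0; 0] |
  exists [:: y; m.+1; m.+1; m.+1; m; m; m.+1; 0; 0; r; 0; 0; 0; 0; 1; 0]];
(split; first case=> [|[|[|[|[|[|[|[|[|i]]]]]]]]]);
by rewrite /counts /r !big_cons big_nil /= ?nth_nil; lia.
Qed.

(* Reading the coordinates of f1 and f2 modulo 2 shows that the atoms
   containing them are either (e3 e4 f1 f2), or (e0 e1 e2 e5 f1 f2), or one atom
   through f1 and one through f2; the multiplicity u of (e0 e1 ... e5) then has a
   fixed parity and is at most 2k+3, and the length is determined by u.  Below,
   r, r' are the multiplicities of the two atoms through f1 and f2, and p, p'
   (resp. q, q') those of the other atoms through f1 (resp. f2). *)
Lemma realized_lengths y k c :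
  realizes c (bvec y k) -> L3p10 y k (\sum_(a <- atom_vecs) c a).
Proof.
move=> real_c; apply/L3p10E; rewrite !big_cons big_nil.
have := real_c 0; have := real_c 1; have := real_c 2; have := real_c 3; have := real_c 4.
have := real_c 5; have := real_c 6; have := real_c 7; have := real_c 8.
rewrite !big_cons !big_nil /=.
set u := c [:: 0; 1; 1; 1; 1; 1; 1; 0; 0].
set p := c [:: 0; 0; 1; 1; 1; 0; 0; 1; 0]; set p' := c [:: 0; 1; 0; 0; 0; 1; 1; 1; 0].
set q := c [:: 0; 0; 1; 1; 0; 1; 0; 0; 1]; set q' := c [:: 0; 1; 0; 0; 1; 0; 1; 0; 1].
set r := c [:: 0; 0; 0; 0; 1; 1; 0; 1; 1]; set r' := c [:: 0; 1; 1; 1; 0; 0; 1; 1; 1].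
move=> f2 f1 e5 e4 e3 e2 e1 e0 z.
have u_half := odd_double_half u.
have [r1 | r0] := eqVneq r 1; first by exists 7, (k.+1 - u./2); split => //; lia.
have [r'1 | r'0] := eqVneq r' 1; first by exists 4, (k.+1 - u./2); split => //; lia.
have [pq | npq] := eqVneq p q; first by exists 6, (k.+1 - u./2); split => //; lia.
by exists 4, (k.+1 - u./2); split => //; lia.
Qed.

Theorem lemma3p10 (y k : nat) :
  @in_system_of_lengths (C2r 5) (L3p10 y k).
Proof.
exists (of_coords gens (bvec y k)); split.
  have [s [_ atoms_s ->]] := @lengths_realized y k 4 0 isT isT.
  by apply: zero_sum_fprod => A /atoms_s [].
move=> n; split => [/factorization_counts [] // c [real_c ->] | /L3p10E [j [m [j_in le_mk ->]]]].
  exact: realized_lengths.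
exact: lengths_realized.
Qed.
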